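(* Let $U$ be a nonempty finite set, $R$ a relation on $U$, and $M(R)$ the relation matroid induced by $R$. Then $cl_{M(R)}(X)=H_R(X)$ for all $X\subseteq U$ if and only if $R$ is an equivalence relation (reflexive, symmetric and transitive).
   Context: For $x\in U$, $RS_R(x)=\{y\in U:(x,y)\in R\}$. $\mathbf{I}(R)=\{X\subseteq U: \forall x,y\in X,\ x\neq y \Rightarrow RS_R(x)\neq RS_R(y)\}$; this is the family of independent sets of a matroid $M(R)=(U,\mathbf{I}(R))$, called the relation matroid induced by $R$. For a matroid $M$ with rank function $r_M(X)=\max\{|I|:I\subseteq X, I \text{ independent}\}$, the closure operator is $cl_M(X)=\{u\in U: r_M(X\cup\{u\})=r_M(X)\}$. The upper approximation operator of $R$ is $H_R(X)=\{x\in U: RS_R(x)\cap X\neq\emptyset\}$ for $X\subseteq U$. *)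

From mathcomp Require Import all_boot.
Set Implicit Arguments. Unset Strict Implicit. Unset Printing Implicit Defensive.

Section RelMatroid.
Variables (U : finType) (R : rel U).

Definition RS (x : U) : {set U} := [set y | R x y].

Definition rel_indep (X : {set U}) : bool :=
  [forall x in X, forall y in X, (x != y) ==> (RS x != RS y)].

Definition rel_rank (X : {set U}) : nat :=
  \max_(I in powerset X | rel_indep I) #|I|.

Definition rel_cl (X : {set U}) : {set U} :=
  [set u | rel_rank (u |: X) == rel_rank X].

Definition upper_approx (X : {set U}) : {set U} :=
  [set x | RS x :&: X != set0].

End RelMatroid.

From mathcomp Require Import all_boot.

Set Implicit Arguments.
Unset Strict Implicit.
Unset Printing Implicit Defensive.

(* The matroid M(R) only sees an element x through its successor set RS x:
   a set is independent exactly when RS is injective on it.  Hence a maximal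
   independent subset of X is a transversal of the fibres of RS over X, and
   the rank of X is the number of distinct successor sets #|RS @: X|.
   Consequently u lies in the closure of X iff RS u = RS x for some x in X,
   while u lies in the upper approximation of X iff R u x for some x in X.
   The two operators therefore agree on every X (taking singletons for one
   direction) iff R x y <-> RS x = RS y, i.e. iff R is the kernel of the map
   RS; and a relation is the kernel of its successor-set map iff it is an
   equivalence relation. *)

Section Transversal.
Variables (T T' : finType) (f : T -> T').

Lemma exists_transversal (X : {set T}) :
  exists2 I : {set T}, I \subset X & {in I &, injective f} /\ f @: I = f @: X.
Proof.
pose rep x := odflt x [pick z in X | f z == f x].
have rep_spec x : x \in X -> rep x \in X /\ f (rep x) = f x.
  by move=> xX; rewrite /rep; case: pickP => [z /andP [zX /eqP fz] | /(_ x)] //=.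
have rep_f x y : x \in X -> f x = f y -> rep x = rep y.
  move=> xX fxy; rewrite /rep fxy; case: pickP => // /(_ x).
  by rewrite xX fxy eqxx.
exists (rep @: X).
  by apply/subsetP => _ /imsetP [x xX ->]; case: (rep_spec x xX).
split.
  move=> _ _ /imsetP [x xX ->] /imsetP [y yX ->].
  by case: (rep_spec x xX) => _ ->; case: (rep_spec y yX) => _ -> /(rep_f _ _ xX).
apply/setP => S; apply/imsetP/imsetP => [[_ /imsetP [x xX ->] ->] | [x xX ->]].
  by case: (rep_spec x xX) => _ ->; exists x.
by exists (rep x); [apply: imset_f | case: (rep_spec x xX)].
Qed.

End Transversal.

Section RelationMatroid.
Variables (U : finType) (R : rel U).

Lemma rel_indepP (I : {set U}) :
  reflect {in I &, injective (RS R)} (rel_indep R I).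
Proof.
apply: (iffP forall_inP) => [indI x y xI yI Exy | injI x xI].
  apply/eqP; apply/negPn/negP => nxy.
  by move/forall_inP/(_ y yI)/implyP/(_ nxy): (indI x xI); rewrite Exy eqxx.
apply/forall_inP => y yI; apply/implyP; apply: contra => /eqP Exy.
by rewrite (injI x y xI yI Exy).
Qed.

Lemma rel_rank_card (X : {set U}) : rel_rank R X = #|RS R @: X|.
Proof.
apply/eqP; rewrite eqn_leq; apply/andP; split.
  apply/bigmax_leqP => I; rewrite inE => /andP [sIX /rel_indepP injI].
  by rewrite -(card_in_imset injI) subset_leq_card ?imsetS.
have [I sIX [injI imI]] := exists_transversal (RS R) X.
rewrite -imI (card_in_imset injI).
by apply: leq_bigmax_cond; rewrite inE sIX; apply/rel_indepP.
Qed.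

Lemma rel_clE (X : {set U}) (u : U) :
  (u \in rel_cl R X) = (RS R u \in RS R @: X).
Proof.
rewrite inE !rel_rank_card imsetU1 cardsU1.
by case: (RS R u \in _); rewrite /= ?eqxx // -[X in _ == X]add0n eqn_add2r.
Qed.

Lemma upper_approxE (X : {set U}) (u : U) :
  (u \in upper_approx R X) = [exists x in X, R u x].
Proof.
rewrite inE; apply/set0Pn/exists_inP => [[x] | [x xX Rux]].
  by rewrite !inE => /andP [Rux xX]; exists x.
by exists x; rewrite !inE Rux.
Qed.

Lemma rel_cl_upper_approxP :
  (forall X, rel_cl R X = upper_approx R X) <->
  (forall x y, R x y = (RS R x == RS R y)).
Proof.
split => [clH x y | kerR X].
  have /setP/(_ x) := clH [set y].
  rewrite rel_clE upper_approxE imset_set1 in_set1 => ->.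
  by apply/idP/exists_inP => [Rxy | [z /set1P -> //]]; exists y; rewrite ?set11.
apply/setP => u; rewrite rel_clE upper_approxE.
apply/imsetP/exists_inP => [[x xX /eqP] | [x xX]]; first by rewrite -kerR; exists x.
by rewrite kerR => /eqP; exists x.
Qed.

Lemma kernel_RS_equivalence :
  (forall x y, R x y = (RS R x == RS R y)) <->
  [/\ reflexive R, symmetric R & transitive R].
Proof.
have RS_mem x y : (y \in RS R x) = R x y by rewrite inE.
split => [kerR | [refl sym tr] x y].
  have refl : reflexive R by move=> x; rewrite kerR.
  split=> // [x y | y x z]; first by rewrite !kerR eq_sym.
  by rewrite !kerR => /eqP -> /eqP ->.
apply/idP/eqP => [Rxy | Exy]; last by rewrite -RS_mem Exy RS_mem.
apply/setP => z; rewrite !RS_mem; apply/idP/idP; first by apply: tr; rewrite sym.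
exact: tr.
Qed.

End RelationMatroid.

Theorem mainTheorem11 (U : finType) (R : rel U) (hU : 0 < #|U|) :
  (forall X : {set U}, rel_cl R X = upper_approx R X) <->
  [/\ reflexive R, symmetric R & transitive R].
Proof.
exact: iff_trans (rel_cl_upper_approxP R) (kernel_RS_equivalence R).
Qed.
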